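(* The unary unbiased black-box complexity of the $\mathrm{DLB}$ problem is $O(n^2)$.
   Context: Let $n$ be an even positive integer. For $x\in\{0,1\}^n$ consider the blocks $(x_{2\ell+1},x_{2\ell+2})$, $\ell=0,\dots,\frac n2-1$. If $x\neq(1,\dots,1)$, let $m$ be the smallest $\ell$ with $x_{2\ell+1}\neq 1$ or $x_{2\ell+2}\neq 1$, and define $\mathrm{DLB}(x)=2m+1$ if $x_{2m+1}+x_{2m+2}=0$ and $\mathrm{DLB}(x)=2m$ if $x_{2m+1}+x_{2m+2}=1$; set $\mathrm{DLB}(1,\dots,1)=n$. The $\mathrm{DLB}$ problem is to maximize $\mathrm{DLB}$. A unary unbiased variation operator $V$ assigns to each $x\in\{0,1\}^n$ a probability distribution $V(x)$ on $\{0,1\}^n$ such that for all $x,y,z$, $\Pr[y=V(x)]=\Pr[y\oplus z=V(x\oplus z)]$, and for all permutations $\sigma$ of $[1..n]$, $\Pr[y=V(x)]=\Pr[\sigma(y)=V(\sigma(x))]$, where $\sigma(x)=(x_{\sigma(1)},\dots,x_{\sigma(n)})$. A unary unbiased black-box algorithm generates $x^{(0)}$ uniformly at random; for $t=1,2,\dots$, based solely on $(f(x^{(0)}),\dots,f(x^{(t-1)}))$, it chooses a unary unbiased variation operator $V$ and an index $i\in[0..t-1]$ and samples $x^{(t)}\sim V(x^{(i)})$; each search point is evaluated when generated. The runtime is the number of fitness evaluations until (and including) the first evaluation of an optimum. The unary unbiased black-box complexity of $\mathrm{DLB}$ is the infimum over all such algorithms of the expected runtime on $\mathrm{DLB}$.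 *)

From HB Require Import structures.
From mathcomp Require Import all_boot all_order all_algebra all_fingroup.
From mathcomp Require Import all_classical all_reals.
From mathcomp Require Import all_analysis.

Set Implicit Arguments.
Unset Strict Implicit.
Unset Printing Implicit Defensive.
Import Order.TTheory GRing.Theory Num.Theory.
Local Open Scope classical_set_scope.
Local Open Scope ring_scope.

Section BB.
Variable R : realType.
Variable n : nat.

(* bit strings x = (x_1,...,x_n), positions 0-indexed: x i with i : 'I_n *)
Definition bitstring := {ffun 'I_n -> bool}.

Definition bxor (x z : bitstring) : bitstring := [ffun i => x i (+) z i].
Definition bperm (s : 'S_n) (x : bitstring) : bitstring := [ffun i => x (s i)].

(* V x y = Pr[ y = V(x) ] *)
Definition variation_operator (V : bitstring -> bitstring -> R) : Prop :=
  (forall x y, 0 <= V x y) /\ (forall x, \sum_(y : bitstring) V x y = 1).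

Definition unary_unbiased (V : bitstring -> bitstring -> R) : Prop :=
  variation_operator V /\
  (forall x y z, V x y = V (bxor x z) (bxor y z)) /\
  (forall (s : 'S_n) x y, V x y = V (bperm s x) (bperm s y)).

(* A black-box algorithm: given the fitness history (f(x^0),...,f(x^(t-1)))
   it chooses a variation operator and an index i into the search history. *)
Record algorithm := Algorithm {
  alg_op  : seq nat -> bitstring -> bitstring -> R;
  alg_idx : seq nat -> nat }.

Definition unary_unbiased_alg (A : algorithm) : Prop :=
  forall h : seq nat,
    unary_unbiased (alg_op A h) /\ ((0 < size h)%N -> (alg_idx A h < size h)%N).

Variable f : bitstring -> nat.

Definition optimal (x : bitstring) : bool := [forall y, f y <= f x]%N.

Definition x0 : bitstring := [ffun=> false].

(* probability that the first t+1 search points are exactly h = (x^0,...,x^t) *)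
Definition hist_prob (A : algorithm) (t : nat) (h : t.+1.-tuple bitstring) : R :=
  (2%:R ^+ n)^-1 *
  \prod_(s < t)
     (let fh := map f (take s.+1 h) in
      alg_op A fh (nth x0 h (alg_idx A fh)) (nth x0 h s.+1)).

Definition prob_runtime_gt (A : algorithm) (t : nat) : R :=
  \sum_(h : t.+1.-tuple bitstring | all (fun x => ~~ optimal x) h) hist_prob A h.

(* E[T] = sum_{t >= 0} Pr[T > t]  (in \bar R; +oo if the series diverges,
   in particular if the optimum is not found with positive probability) *)
Definition expected_runtime (A : algorithm) : \bar R :=
  (\sum_(0 <= t <oo) (prob_runtime_gt A t)%:E)%E.

Definition uu_bb_complexity : \bar R :=
  ereal_inf [set expected_runtime A | A in [set A | unary_unbiased_alg A]].

End BB.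

(* DLB with 0-indexed bits: block l is (x_{2l}, x_{2l+1}) *)
Definition DLB (n : nat) (x : bitstring n) : nat :=
  let b j := nth false (map x (enum 'I_n)) j in
  let m := find (fun l => ~~ (b l.*2 && b l.*2.+1)) (iota 0 n./2) in
  if m == n./2 then n
  else if b m.*2 || b m.*2.+1 then m.*2 (* exactly one 1 in block m *)
  else m.*2.+1.                           (* block m is 00 *)

(* The bound is witnessed by randomized local search: flip one uniformly random
   bit of the current point and move to the offspring when its DLB value [w]
   satisfies [accepts v w] for the current value [v], i.e. the index of the first
   non-11 block grows, or stays the same while that block is 00.  The potential
   2n (n/2 - v/2) + n [v odd] of the current point never increases under this rule,
   and some single flip lowers it by at least n (turn the 00 block into 01, or
   complete the 01 block to 11), so it drops by at least 1 per step in
   expectation.  Since it starts below 2n^2, the additive drift argument bounds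
   the expected runtime by 2n^2. *)

From HB Require Import structures.
From mathcomp Require Import all_boot all_order all_algebra all_fingroup.
From mathcomp Require Import all_classical all_reals.
From mathcomp Require Import all_analysis.
From mathcomp Require Import zify lra.
Import Order.TTheory GRing.Theory Num.Theory.

Set Implicit Arguments.
Unset Strict Implicit.
Unset Printing Implicit Defensive.

Section Blocks.
Variables (n : nat) (b : nat -> bool).

Definition block_open (l : nat) : bool := ~~ (b l.*2 && b l.*2.+1).

Definition first_open : nat := find block_open (iota 0 n./2).

Definition dlb_bits : nat :=
  if first_open == n./2 then n
  else if b first_open.*2 || b first_open.*2.+1 then first_open.*2
  else first_open.*2.+1.

Lemma first_open_le : first_open <= n./2.
Proof. by have := find_size block_open (iota 0 n./2); rewrite size_iota. Qed.

Lemma first_openP : first_open < n./2 -> block_open first_open.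
Proof.
move=> lt_m; have has_open : has block_open (iota 0 n./2).
  by rewrite has_find size_iota.
by have := nth_find 0 has_open; rewrite nth_iota // add0n.
Qed.

Lemma before_first_open l : l < first_open -> b l.*2 && b l.*2.+1.
Proof.
move=> lt_lm; have lt_l : l < n./2 by apply: leq_trans lt_lm first_open_le.
by have := before_find 0 lt_lm; rewrite nth_iota // add0n => /negbFE.
Qed.

Lemma first_open_eq m : m < n./2 -> block_open m ->
  (forall l, l < m -> ~~ block_open l) -> first_open = m.
Proof.
move=> lt_m open_m closed_lt.
have [lt_fm|lt_mf|//] := ltngtP first_open m.
  by have := first_openP (ltn_trans lt_fm lt_m); rewrite (negbTE (closed_lt _ lt_fm)).
by have := before_find 0 lt_mf; rewrite nth_iota // add0n open_m.
Qed.

Lemma first_open_gt m : m < n./2 -> (forall l, l <= m -> ~~ block_open l) ->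
  m < first_open.
Proof.
move=> lt_m closed_le; rewrite ltnNge; apply/negP => le_fm.
by have := first_openP (leq_ltn_trans le_fm lt_m); rewrite (negbTE (closed_le _ le_fm)).
Qed.

Lemma dlb_bits_le : dlb_bits <= n.
Proof.
rewrite /dlb_bits; case: eqP => // /eqP ne_fn.
have : first_open < n./2 by rewrite ltn_neqAle ne_fn first_open_le.
have := odd_double_half n; case: ifP => _; rewrite -!muln2; lia.
Qed.

End Blocks.

Lemma eq_dlb_bits n b b' : b =1 b' -> dlb_bits n b = dlb_bits n b'.
Proof.
move=> eq_b; have eq_open : block_open b =1 block_open b'.
  by move=> l; rewrite /block_open !eq_b.
by rewrite /dlb_bits /first_open (eq_find eq_open) !eq_b.
Qed.

Definition flip_at (b : nat -> bool) (j : nat) (k : nat) : bool :=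
  if k == j then ~~ b k else b k.

Lemma dlb_bits_flip_odd n b : ~~ odd n -> odd (dlb_bits n b) ->
  dlb_bits n (flip_at b (dlb_bits n b).-1) = (dlb_bits n b).-1.
Proof.
move=> even_n; rewrite /dlb_bits.
case: eqP => [_|/eqP ne_fn]; first by rewrite (negbTE even_n).
have lt_fn : first_open n b < n./2 by rewrite ltn_neqAle ne_fn first_open_le.
set m := first_open n b; case: ifP => [_|]; first by rewrite odd_double.
move/negbT; rewrite negb_or => /andP[b1 b2] _ /=.
have -> : first_open n (flip_at b m.*2) = m.
  apply: first_open_eq => //.
    rewrite /block_open /flip_at eqxx (negbTE b1) /=.
    by case: eqP => [/eqP|_]; [rewrite -!muln2; lia | rewrite (negbTE b2)].
  move=> l lt_lm; have := before_first_open lt_lm.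
  have ne_l : l.*2 != m.*2 by rewrite -!muln2; lia.
  have ne_l' : l.*2.+1 != m.*2 by rewrite -!muln2; lia.
  by rewrite /block_open /flip_at (ifN_eq _ _ ne_l) (ifN_eq _ _ ne_l') negbK.
by rewrite (negbTE ne_fn) /flip_at eqxx (negbTE b1).
Qed.

Lemma dlb_bits_flip_even n b : ~~ odd (dlb_bits n b) -> dlb_bits n b < n ->
  exists2 j, j < n & (dlb_bits n b)./2 < (dlb_bits n (flip_at b j))./2.
Proof.
rewrite /dlb_bits; case: eqP => [_|/eqP ne_fn]; first by rewrite ltnn.
have lt_fn : first_open n b < n./2 by rewrite ltn_neqAle ne_fn first_open_le.
have def_n := odd_double_half n.
set m := first_open n b; case: ifP => [one_set _ _|]; last by rewrite /= odd_double.
have open_m := first_openP lt_fn; rewrite -/m /block_open in open_m.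
exists (if b m.*2 then m.*2.+1 else m.*2).
  by case: ifP => _; rewrite -!muln2 in def_n *; lia.
set b' := flip_at b _.
have lt_mf : m < first_open n b'.
  apply: first_open_gt => // l; rewrite leq_eqVlt => /orP[/eqP ->|lt_lm].
    rewrite /block_open /b' /flip_at; move: one_set open_m.
    by case: (b m.*2); case: (b m.*2.+1); rewrite //= ?eqxx -!muln2; case: eqP => //; lia.
  have := before_first_open lt_lm; rewrite /block_open /b' /flip_at.
  by rewrite -!muln2 !ifN_eq ?negbK //; case: ifP => _; lia.
rewrite doubleK; case: ifP => _ //; case: ifP => _.
  by rewrite doubleK.
by rewrite /= uphalf_double.
Qed.

Lemma big_tuple_rcons (T : finType) (V : nmodType) t (F : t.+1.-tuple T -> V) :
  (\sum_(h : t.+1.-tuple T) F h = \sum_(h : t.-tuple T) \sum_(y : T) F [tuple of rcons h y])%R.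
Proof.
pose rc (p : t.-tuple T * T) := [tuple of rcons p.1 p.2].
have rc_bij : bijective rc.
  apply: inj_card_bij; last by rewrite card_prod !card_tuple expnS mulnC.
  by move=> [h1 y1] [h2 y2] /(congr1 val) /rcons_inj [/val_inj -> ->].
by rewrite (reindex rc) ?pair_big //; apply: onW_bij.
Qed.

Section PotentialDrift.
Local Open Scope ring_scope.
Variables (R : realType) (n : nat) (f : bitstring n -> nat) (A : algorithm R n).
Hypothesis alg_idx_lt : forall s, (0 < size s)%N -> (alg_idx A s < size s)%N.
Hypothesis alg_op_ge0 : forall s x y, 0 <= alg_op A s x y.

Definition next_prob (h : seq (bitstring n)) (y : bitstring n) : R :=
  alg_op A (map f h) (nth (x0 n) h (alg_idx A (map f h))) y.

Lemma hist_prob_ge0 t (h : t.+1.-tuple (bitstring n)) : 0 <= hist_prob f A h.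
Proof.
apply: mulr_ge0; first by rewrite invr_ge0 exprn_ge0.
by apply: prodr_ge0 => i _; apply: alg_op_ge0.
Qed.

Lemma prob_runtime_gt_ge0 t : 0 <= prob_runtime_gt f A t.
Proof. by apply: sumr_ge0 => h _; apply: hist_prob_ge0. Qed.

Lemma hist_prob_rcons t (h : t.+1.-tuple (bitstring n)) y :
  hist_prob f A [tuple of rcons h y] = hist_prob f A h * next_prob h y.
Proof.
have take_rcons k : (k <= t.+1)%N -> take k (rcons h y) = take k h.
  by move=> le_kt; rewrite -cats1 takel_cat ?size_tuple.
have idx_lt s : (s <= t)%N -> (alg_idx A (map f (take s.+1 h)) < size h)%N.
  move=> le_st; have := alg_idx_lt (s := map f (take s.+1 h)).
  by rewrite size_map size_takel ?size_tuple // => /(_ isT) /leq_trans; apply.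
rewrite /hist_prob big_ord_recr /= mulrA; congr (_ * _ * _).
  apply: eq_bigr => s _ /=; have lt_st : (s.+1 <= t)%N := ltn_ord s.
  rewrite take_rcons ?(leqW lt_st) // !nth_rcons idx_lt ?(ltnW lt_st) //.
  by rewrite size_tuple ltnS lt_st.
have idx_h : (alg_idx A (map f h) < size h)%N.
  by rewrite -(size_map f) alg_idx_lt // size_map size_tuple.
rewrite take_rcons // take_oversize ?size_tuple //.
by rewrite /next_prob !nth_rcons idx_h size_tuple ltnn eqxx.
Qed.

Variable Phi : seq (bitstring n) -> R.
Hypothesis Phi_ge0 : forall h, 0 <= Phi h.
Hypothesis Phi_drift : forall t (h : t.+1.-tuple (bitstring n)),
  all (fun x => ~~ optimal f x) h ->
  \sum_y next_prob h y * Phi (rcons h y) <= Phi h - 1.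

Definition surviving_potential t : R :=
  \sum_(h : t.+1.-tuple (bitstring n) | all (fun x => ~~ optimal f x) h)
    hist_prob f A h * Phi h.

Lemma surviving_potential_ge0 t : 0 <= surviving_potential t.
Proof. by apply: sumr_ge0 => h _; apply: mulr_ge0 (hist_prob_ge0 _) (Phi_ge0 _). Qed.

Lemma surviving_potential_step t :
  surviving_potential t.+1 <= surviving_potential t - prob_runtime_gt f A t.
Proof.
rewrite /surviving_potential /prob_runtime_gt -sumrB big_mkcond big_tuple_rcons /=.
rewrite [leRHS]big_mkcond /=; apply: ler_sum => h _; case: ifP => alive; last first.
  by rewrite big1 // => y _; rewrite all_rcons alive andbF.
apply: le_trans (_ : \sum_y hist_prob f A h * (next_prob h y * Phi (rcons h y)) <= _).
  apply: ler_sum => y _; rewrite all_rcons; case: ifP => _.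
    by rewrite hist_prob_rcons mulrA.
  exact: mulr_ge0 (hist_prob_ge0 h) (mulr_ge0 (alg_op_ge0 _ _ _) (Phi_ge0 _)).
rewrite -mulr_sumr -[X in _ <= _ - X]mulr1 -mulrBr.
by apply: ler_wpM2l; [exact: hist_prob_ge0 | exact: Phi_drift].
Qed.

Lemma sum_prob_runtime_gt_le T :
  \sum_(t < T) prob_runtime_gt f A t + surviving_potential T <= surviving_potential 0.
Proof.
elim: T => [|T IH]; first by rewrite big_ord0 add0r.
rewrite big_ord_recr /= -addrA; apply: le_trans IH; rewrite lerD2l.
by have := surviving_potential_step T; lra.
Qed.

Variable M : R.
Hypothesis Phi_init_le : forall h : 1.-tuple (bitstring n), Phi h <= M.

Lemma surviving_potential0_le : surviving_potential 0 <= M.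
Proof.
have w_ge0 : 0 <= (2%:R ^+ n)^-1 :> R by rewrite invr_ge0 exprn_ge0.
apply: le_trans (_ : \sum_(h : 1.-tuple (bitstring n)) (2%:R ^+ n)^-1 * M <= _).
  rewrite /surviving_potential big_mkcond /=; apply: ler_sum => h _.
  rewrite /hist_prob big_ord0 mulr1.
  case: ifP => _; first exact: ler_wpM2l.
  exact: mulr_ge0 (le_trans (Phi_ge0 h) (Phi_init_le h)).
rewrite sumr_const card_tuple card_ffun card_bool card_ord expn1.
by rewrite -[_ *+ _]mulr_natl natrX mulrA mulfV ?mul1r // expf_neq0 // pnatr_eq0.
Qed.

Lemma expected_runtime_le_potential : (expected_runtime f A <= M%:E)%E.
Proof.
apply: lime_le.
  by apply: is_cvg_nneseries => t _ _; rewrite lee_fin prob_runtime_gt_ge0.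
apply: nearW => T; rewrite sumEFin lee_fin big_mkord.
apply: le_trans surviving_potential0_le; apply: le_trans (sum_prob_runtime_gt_le T).
by rewrite lerDl surviving_potential_ge0.
Qed.

End PotentialDrift.

Section BitStrings.
Variable n : nat.

(* [DLB x] is convertible to [dlb_bits n (bit_seq x)]. *)
Definition bit_seq (x : bitstring n) (k : nat) : bool := nth false (map x (enum 'I_n)) k.

Definition flip (x : bitstring n) (i : 'I_n) : bitstring n :=
  [ffun k => if k == i then ~~ x k else x k].

Lemma bit_seq_ord (x : bitstring n) (i : 'I_n) : bit_seq x i = x i.
Proof. by rewrite /bit_seq (nth_map i) ?size_enum_ord // nth_ord_enum. Qed.

Lemma bit_seq_flip (x : bitstring n) i : bit_seq (flip x i) =1 flip_at (bit_seq x) i.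
Proof.
move=> k; have [lt_kn|le_nk] := ltnP k n.
  by rewrite -[k]/(nat_of_ord (Ordinal lt_kn)) /flip_at !bit_seq_ord ffunE.
have ne_ki : k != i by apply: contraTneq le_nk => ->; rewrite -ltnNge.
have size_bits (y : bitstring n) : size (map y (enum 'I_n)) = n.
  by rewrite size_map size_enum_ord.
by rewrite /flip_at (ifN_eq _ _ ne_ki) /bit_seq !nth_default ?size_bits.
Qed.

Lemma DLB_flip (x : bitstring n) i : DLB (flip x i) = dlb_bits n (flip_at (bit_seq x) i).
Proof. exact: eq_dlb_bits (bit_seq_flip x i). Qed.

Lemma DLB_le (x : bitstring n) : (DLB x <= n)%N.
Proof. exact: dlb_bits_le. Qed.

Lemma DLB_lt_nonoptimal (x : bitstring n) : ~~ optimal (@DLB n) x -> (DLB x < n)%N.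
Proof.
apply: contraR; rewrite -leqNgt => le_nx.
by apply/forallP => y; apply: leq_trans (DLB_le y) le_nx.
Qed.

Lemma flip_bxor (x z : bitstring n) i : flip (bxor x z) i = bxor (flip x i) z.
Proof. by apply/ffunP => k; rewrite !ffunE; case: eqP; rewrite ?ffunE // addNb. Qed.

Lemma bxorK (z : bitstring n) : involutive (fun y => bxor y z).
Proof. by move=> y; apply/ffunP => k; rewrite !ffunE addbK. Qed.

Lemma bpermK (s : 'S_n) : cancel (bperm s) (bperm (s^-1)%g).
Proof. by move=> y; apply/ffunP => k; rewrite !ffunE permKV. Qed.

Lemma flip_bperm (s : 'S_n) (x : bitstring n) j :
  flip (bperm s x) ((s^-1)%g j) = bperm s (flip x j).
Proof. by apply/ffunP => k; rewrite !ffunE -(inj_eq (@perm_inj _ s)) permKV. Qed.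

End BitStrings.

Section OneBitFlip.
Local Open Scope ring_scope.
Variables (R : realType) (n : nat).

Definition one_bit_flip (x y : bitstring n) : R :=
  n%:R^-1 * \sum_(i < n) (y == flip x i)%:R.

Lemma one_bit_flip_sum x (g : bitstring n -> R) :
  \sum_y one_bit_flip x y * g y = n%:R^-1 * \sum_(i < n) g (flip x i).
Proof.
under eq_bigr do rewrite -mulrA mulr_suml.
rewrite -mulr_sumr exchange_big /=; congr (_ * _); apply: eq_bigr => i _.
rewrite (bigD1 (flip x i)) //= eqxx mul1r big1 ?addr0 // => y /negbTE ->.
by rewrite mul0r.
Qed.

Lemma one_bit_flip_unbiased : (0 < n)%N -> unary_unbiased one_bit_flip.
Proof.
move=> n_gt0; split; [split|split].
- move=> x y; rewrite mulr_ge0 ?invr_ge0 ?ler0n //.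
  by apply: sumr_ge0 => i _; rewrite ler0n.
- move=> x; have := one_bit_flip_sum x (fun _ => 1); under eq_bigr do rewrite mulr1.
  by move=> ->; rewrite sumr_const card_ord mulVf // pnatr_eq0 -lt0n.
- move=> x y z; congr (_ * _); apply: eq_bigr => i _.
  by rewrite flip_bxor (inj_eq (inv_inj (bxorK z))).
- move=> s x y; congr (_ * _); rewrite [RHS](reindex_inj (@perm_inj _ (s^-1)%g)) /=.
  by apply: eq_bigr => j _; rewrite flip_bperm (inj_eq (can_inj (bpermK s))).
Qed.

End OneBitFlip.

Definition accepts (v w : nat) : bool := if odd v then v./2 <= w./2 else v./2 < w./2.

(* [select s] is the position in the fitness history [s] of the current search
   point: a new point becomes current when its fitness is [accepts]ed. *)
Fixpoint select_rev (r : seq nat) : nat :=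
  if r is w :: r' then
    if accepts (nth 0 (rev r') (select_rev r')) w then size r' else select_rev r'
  else 0.

Definition select (s : seq nat) : nat := select_rev (rev s).

Lemma select_rcons s w :
  select (rcons s w) = if accepts (nth 0 s (select s)) w then size s else select s.
Proof. by rewrite /select rev_rcons /= revK size_rev. Qed.

Lemma select_le s : select s <= (size s).-1.
Proof.
elim/last_ind: s => // s w IH; rewrite select_rcons size_rcons /=.
by case: ifP => // _; apply: leq_trans IH (leq_pred _).
Qed.

Lemma select_lt s : 0 < size s -> select s < size s.
Proof. by move=> s_gt0; apply: leq_ltn_trans (select_le s) _; rewrite prednK. Qed.

Definition dlb_potential (n v : nat) : nat := 2 * n * (n./2 - v./2) + n * odd v.

Lemma dlb_potential_le n v : dlb_potential n v <= 2 * n ^ 2.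
Proof.
have le_n : (n./2 - v./2).*2 <= n.
  apply: leq_trans (_ : n./2.*2 <= n); first by rewrite leq_double leq_subr.
  by rewrite -{2}(odd_double_half n) leq_addl.
have := leq_mul (leqnn n) le_n; have := leq_mul (leqnn n) (leq_b1 (odd v)).
rewrite /dlb_potential -!muln2; nia.
Qed.

Lemma dlb_potential_half_lt n v w : v./2 < n./2 -> v./2 < w./2 ->
  dlb_potential n w + n <= dlb_potential n v.
Proof.
move=> lt_vn lt_vw; have le_diff : (n./2 - w./2).+1 <= n./2 - v./2 by lia.
have := leq_mul (leqnn (2 * n)) le_diff; have := leq_mul (leqnn n) (leq_b1 (odd w)).
rewrite /dlb_potential; lia.
Qed.

Lemma dlb_potential_accepts n v w : v./2 < n./2 -> accepts v w ->
  dlb_potential n w <= dlb_potential n v.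
Proof.
rewrite /accepts; case: ifP => odd_v lt_vn le_vw; last first.
  exact: leq_trans (leq_addr _ _) (dlb_potential_half_lt lt_vn le_vw).
have := leq_mul (leqnn (2 * n)) (leq_sub2l n./2 le_vw).
have := leq_mul (leqnn n) (leq_b1 (odd w)).
rewrite /dlb_potential odd_v; lia.
Qed.

Lemma dlb_potential_pred_odd n v : odd v -> dlb_potential n v.-1 + n = dlb_potential n v.
Proof.
move=> odd_v; have -> : v.-1 = (v./2).*2 by rewrite -{1}(odd_double_half v) odd_v.
by rewrite /dlb_potential doubleK odd_double odd_v muln0 muln1 addn0.
Qed.

Lemma half_lt_even n v : ~~ odd n -> v < n -> v./2 < n./2.
Proof.
by move=> even_n; rewrite ltn_half_double -{1}(odd_double_half n) (negbTE even_n).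
Qed.

Section DLBPotential.
Variable n : nat.
Hypothesis n_even : ~~ odd n.

Definition potential_after (x y : bitstring n) : nat :=
  dlb_potential n (DLB (if accepts (DLB x) (DLB y) then y else x)).

Lemma potential_after_le x y : DLB x < n -> potential_after x y <= dlb_potential n (DLB x).
Proof.
rewrite /potential_after; case: ifP => // acc_xy lt_xn.
exact: dlb_potential_accepts (half_lt_even n_even lt_xn) acc_xy.
Qed.

Lemma exists_flip_potential_drop x : DLB x < n ->
  exists i, potential_after x (flip x i) + n <= dlb_potential n (DLB x).
Proof.
move=> lt_xn; have lt_half := half_lt_even n_even lt_xn.
case odd_x: (odd (DLB x)).
  have lt_pred : (DLB x).-1 < n by apply: leq_ltn_trans (leq_pred _) lt_xn.
  exists (Ordinal lt_pred).
  have DLB_y : DLB (flip x (Ordinal lt_pred)) = (DLB x).-1.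
    by rewrite DLB_flip dlb_bits_flip_odd.
  have half_pred : ((DLB x).-1)./2 = (DLB x)./2.
    by rewrite -{1}(odd_double_half (DLB x)) odd_x doubleK.
  rewrite /potential_after DLB_y /accepts odd_x half_pred leqnn /= DLB_y.
  by rewrite dlb_potential_pred_odd.
have [j lt_jn lt_flip] := dlb_bits_flip_even (negbT odd_x) lt_xn.
exists (Ordinal lt_jn); rewrite /potential_after DLB_flip /accepts odd_x lt_flip.
by rewrite DLB_flip; apply: dlb_potential_half_lt.
Qed.

Lemma sum_potential_after_flip x : DLB x < n ->
  \sum_(i < n) potential_after x (flip x i) + n <= n * dlb_potential n (DLB x).
Proof.
move=> lt_xn; have [i0 drop_i0] := exists_flip_potential_drop lt_xn.
have -> : n * dlb_potential n (DLB x) = \sum_(i < n) dlb_potential n (DLB x).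
  by rewrite sum_nat_const card_ord.
rewrite (bigD1 i0) //= [in leqRHS](bigD1 i0) //=.
rewrite addnAC leq_add // leq_sum // => i _; exact: potential_after_le.
Qed.

End DLBPotential.

Section RandomizedLocalSearch.
Local Open Scope ring_scope.
Variables (R : realType) (n : nat).
Hypotheses (n_even : ~~ odd n) (n_gt0 : (0 < n)%N).

Definition rls : algorithm R n := Algorithm (fun=> @one_bit_flip R n) select.

Lemma rls_unbiased : unary_unbiased_alg rls.
Proof. by move=> h; split; [exact: one_bit_flip_unbiased | exact: select_lt]. Qed.

Definition current (h : seq (bitstring n)) : bitstring n :=
  nth (x0 n) h (select (map (@DLB n) h)).

Lemma select_DLB_lt h : (0 < size h)%N -> (select (map (@DLB n) h) < size h)%N.
Proof. by move=> h_gt0; rewrite -(size_map (@DLB n)) select_lt ?size_map. Qed.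

Lemma current_rcons h y : (0 < size h)%N ->
  current (rcons h y) = if accepts (DLB (current h)) (DLB y) then y else current h.
Proof.
move=> h_gt0; have lt_sel := select_DLB_lt h_gt0.
rewrite /current map_rcons select_rcons (nth_map (x0 n)) // size_map.
by case: ifP => _; rewrite nth_rcons ?ltnn ?eqxx ?lt_sel.
Qed.

Definition rls_potential (h : seq (bitstring n)) : R :=
  (dlb_potential n (DLB (current h)))%:R.

Lemma rls_potential_drift t (h : t.+1.-tuple (bitstring n)) :
  all (fun x => ~~ optimal (@DLB n) x) h ->
  \sum_y next_prob (@DLB n) rls h y * rls_potential (rcons h y) <= rls_potential h - 1.
Proof.
move=> alive; have h_gt0 : (0 < size h)%N by rewrite size_tuple.
have lt_cur : (DLB (current h) < n)%N.
  by apply: DLB_lt_nonoptimal; move/allP: alive; apply; rewrite mem_nth ?select_DLB_lt.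
rewrite /next_prob one_bit_flip_sum -/(current h).
under eq_bigr do rewrite /rls_potential current_rcons // -/(potential_after _ _).
have := sum_potential_after_flip n_even lt_cur; rewrite -(ler_nat R) natrD natrM natr_sum.
rewrite /rls_potential; set S := (\sum_i _)%R; set P := (dlb_potential _ _)%:R => le_S.
have n_neq0 : n%:R != 0 :> R by rewrite pnatr_eq0 -lt0n.
apply: le_trans (_ : n%:R^-1 * (n%:R * P - n%:R) <= _).
  by rewrite ler_wpM2l ?invr_ge0 ?ler0n // lerBrDr.
by rewrite mulrBr mulKf // mulVf.
Qed.

Lemma rls_expected_runtime : (expected_runtime (@DLB n) rls <= (2 * n ^ 2)%:R%:E)%E.
Proof.
apply: (@expected_runtime_le_potential _ _ _ _ _ _ rls_potential).
- exact: select_lt.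
- by move=> s; have [[]] := one_bit_flip_unbiased R n_gt0.
- by move=> h; exact: ler0n.
- exact: rls_potential_drift.
- by move=> h; rewrite ler_nat dlb_potential_le.
Qed.

End RandomizedLocalSearch.

Local Open Scope ring_scope.

Theorem lemma10 (R : realType) :
  exists (C : R) (n0 : nat), forall n : nat,
    ~~ odd n -> (0 < n)%N -> (n0 <= n)%N ->
    (uu_bb_complexity R (@DLB n) <= (C * (n%:R) ^+ 2)%:E)%E.
Proof.
exists 2%:R, 0%N => n even_n n_gt0 _.
apply: le_trans (ereal_inf_lbound _) _; first by exists (rls R n) => //; exact: rls_unbiased.
by have := rls_expected_runtime R even_n n_gt0; rewrite natrM natrX.
Qed.
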